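(* Suppose the cost function $C$ is subadditive and valuations are arbitrary (monotone and normalized). Then the Sequential Mechanism with lexicographic tie-breaking is weakly groupstrategyproof, $1$-budget-balanced (i.e. $\sum_ip_i=C(\overrightarrow{ALG})$), and is an $n$-approximation to the social cost.
   Context: Setting. $N=\{1,\dots,n\}$ is a set of players and $M_1,\dots,M_n$ are pairwise disjoint finite sets; $M=\bigcup_i M_i$; allocations $\vec S=(S_1,\dots,S_n)$ with $S_i\subseteq M_i$ are identified with subsets of $M$. A cost function is a monotone $C:2^M\to\mathbb{R}_{\ge0}$ with $C(\emptyset)=0$; subadditive: $C(S)+C(T)\ge C(S\cup T)$. Valuations $v_i:2^{M_i}\to\mathbb{R}_{\ge0}$ are monotone with $v_i(\emptyset)=0$. Sequential Mechanism with lexicographic tie-breaking: start with $ALG_i=\emptyset$ for all $i$; for $i=1,\dots,n$ in order, set $ALG_i$ to the lexicographically first element (under a fixed order) of $\arg\max_{S\subseteq M_i}v_i(S)-[C(\overrightarrow{ALG}\cup S)-C(\overrightarrow{ALG})]$ (with $\overrightarrow{ALG}$ the current allocation of players $1,\dots,i-1$), and charge $p_i=C(ALG_1,\dots,ALG_i)-C(ALG_1,\dots,ALG_{i-1})$. Weakly groupstrategyproof: for every $K\subseteq N$ and every joint misreport by $K$ (others truthful), if $v_i(S_i)-p_i\le v_i(S'_i)-p'_i$ for all $i\in K$ then $v_j(S_j)-p_j=v_j(S'_j)-p'_j$ for some $j\in K$, where $(\vec S,\vec p)$ and $(\vec S',\vec p')$ are the outputs under truthful reports and under the misreport. Social cost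 $\pi(\vec S)=C(\vec S)+\sum_i[v_i(M_i)-v_i(S_i)]$; $n$-approximation: $\pi(\overrightarrow{ALG})\le n\min_{\vec S}\pi(\vec S)$ for all profiles. *)

From HB Require Import structures.
From mathcomp Require Import all_boot all_order all_algebra.
Set Implicit Arguments. Unset Strict Implicit. Unset Printing Implicit Defensive.
Import Order.TTheory GRing.Theory Num.Theory.
Local Open Scope ring_scope.

(* Items form a finite type T; [own x] is the player owning item x, so
   M_i = [set x | own x == i]; the M_i are pairwise disjoint and cover T = M.
   Allocations are subsets of T. *)
Section Mechanism.
Variables (R : realFieldType) (T : finType) (n : nat) (own : T -> 'I_n).
Variable C : {set T} -> R.

Definition Mset (i : 'I_n) : {set T} := [set x | own x == i].

Definition cost_function : Prop :=
  [/\ C set0 = 0, (forall S, 0 <= C S) &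
      (forall S S' : {set T}, S \subset S' -> C S <= C S')].

Definition subadditive : Prop :=
  forall S S' : {set T}, C (S :|: S') <= C S + C S'.

Definition valuation (i : 'I_n) (v : {set T} -> R) : Prop :=
  [/\ v set0 = 0, (forall S : {set T}, S \subset Mset i -> 0 <= v S) &
      (forall S S' : {set T}, S \subset S' -> S' \subset Mset i -> v S <= v S')].

Variable ord : 'I_n -> seq {set T}.

Definition tiebreak_order : Prop :=
  forall i, perm_eq (ord i) (enum (powerset (Mset i))).

Definition mutil (b : 'I_n -> {set T} -> R) (i : 'I_n) (A S : {set T}) : R :=
  b i S - (C (A :|: S) - C A).

Definition maxers (b : 'I_n -> {set T} -> R) (i : 'I_n) (A : {set T}) : {set {set T}} :=
  [set S : {set T} | (S \subset Mset i) &&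
     [forall S' : {set T}, (S' \subset Mset i) ==> (mutil b i A S' <= mutil b i A S)]].

Definition choose_set (b : 'I_n -> {set T} -> R) (i : 'I_n) (A : {set T}) : {set T} :=
  head set0 [seq S <- ord i | S \in maxers b i A].

(* allocation of players 0, ..., k-1 *)
Fixpoint prefix (b : 'I_n -> {set T} -> R) (k : nat) : {set T} :=
  match k with
  | 0 => set0
  | k'.+1 =>
      let A := prefix b k' in
      A :|: (if insub k' is Some i then choose_set b i A else set0)
  end.

Definition ALGi b (i : 'I_n) : {set T} := choose_set b i (prefix b i).
Definition price b (i : 'I_n) : R :=
  C (prefix b i :|: ALGi b i) - C (prefix b i).
Definition ALG b : {set T} := prefix b n.

Definition social_cost (v : 'I_n -> {set T} -> R) (S : {set T}) : R :=
  C S + \sum_(i < n) (v i (Mset i) - v i (S :&: Mset i)).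

Definition utility (v b : 'I_n -> {set T} -> R) (i : 'I_n) : R :=
  v i (ALGi b i) - price b i.

Definition weakly_gsp (v : 'I_n -> {set T} -> R) : Prop :=
  forall (K : {set 'I_n}) (b : 'I_n -> {set T} -> R),
    K != set0 ->
    (forall j, j \notin K -> b j =1 v j) ->
    (forall j, j \in K -> valuation j (b j)) ->
    (forall i, i \in K -> utility v v i <= utility v b i) ->
    exists2 j, j \in K & utility v v j = utility v b j.

End Mechanism.

From Pilot Require Import Defs.
From HB Require Import structures.
From mathcomp Require Import all_boot all_order all_algebra.
From mathcomp Require Import lra.
Import Order.TTheory GRing.Theory Num.Theory.
Local Open Scope ring_scope.

(* The prices telescope to the cost of the final allocation.  In a deviating
   coalition, the member who moves first faces the same allocation of her
   predecessors as under truthful reports, and her truthful choice maximizes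
   her true utility against it, so she gains nothing.  For the approximation,
   maximality of player i's choice against the alternative S :&: M_i and
   subadditivity bound her price plus her lost value by C(S) plus her lost
   value under S, hence by the social cost of S; summing over the n players
   gives the factor n. *)

Section Sequential.
Variables (R : realFieldType) (T : finType) (n : nat) (own : T -> 'I_n).
Variables (C : {set T} -> R) (ord : 'I_n -> seq {set T}).
Hypothesis tb : tiebreak_order own ord.

Local Notation Mset := (Mset own).
Local Notation maxers := (maxers own C).
Local Notation choose := (choose_set own C ord).
Local Notation pre := (Defs.prefix own C ord).
Local Notation ALGi := (Defs.ALGi own C ord).
Local Notation ALG := (Defs.ALG own C ord).
Local Notation price := (Defs.price own C ord).
Local Notation utility := (Defs.utility own C ord).

Lemma choose_set_maxers b i A : choose b i A \in maxers b i A.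
Proof.
have P0 : set0 \in powerset (Mset i) by rewrite powersetE sub0set.
have [S0 S0sub S0max] := arg_maxP (mutil C b i A) P0.
have S0in : S0 \in maxers b i A.
  have S0s : S0 \subset Mset i by rewrite -powersetE.
  rewrite inE S0s; apply/forallP => S; apply/implyP => HS.
  by apply: S0max; rewrite -[_ _ S]/(S \in powerset (Mset i)) powersetE.
set s := [seq S <- ord i | S \in maxers b i A].
have S0_s : S0 \in s by rewrite mem_filter S0in (perm_mem (tb i)) mem_enum.
(* [choose b i A] is [head set0 s], i.e. [nth set0 s 0]. *)
have /(mem_nth set0) : (0 < size s)%N by case: (s) S0_s.
by rewrite mem_filter => /andP[].
Qed.

Lemma choose_set_sub b i A : choose b i A \subset Mset i.
Proof. by have := choose_set_maxers b i A; rewrite inE => /andP[]. Qed.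

Lemma choose_set_max b i A (S : {set T}) :
  S \subset Mset i -> mutil C b i A S <= mutil C b i A (choose b i A).
Proof.
have := choose_set_maxers b i A; rewrite inE => /andP[_ /forallP max_choose].
exact/implyP/max_choose.
Qed.

Lemma choose_set_eq b b' i A : b i =1 b' i -> choose b i A = choose b' i A.
Proof.
move=> eq_bi; rewrite /choose_set; suff -> : maxers b i A = maxers b' i A by [].
apply/setP => S; rewrite !inE /mutil eq_bi.
by congr (_ && _); apply: eq_forallb => S'; rewrite eq_bi.
Qed.

Lemma prefix_S b (i : 'I_n) : pre b i.+1 = pre b i :|: ALGi b i.
Proof. by rewrite /= valK. Qed.

Lemma prefix_eq b b' k :
  (forall i : 'I_n, (i < k)%N -> b i =1 b' i) -> pre b k = pre b' k.
Proof.
elim: k => [|k IHk] eq_b //=.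
rewrite IHk => [|i lt_ik]; last by apply: eq_b; apply: ltnW.
by case: insubP => [i _ ik|] //; rewrite (choose_set_eq _ _ _ _ (eq_b i _)) // ik.
Qed.

Lemma prefix_setI_Mset b k (i : 'I_n) :
  pre b k :&: Mset i = if (i < k)%N then ALGi b i else set0.
Proof.
elim: k => [|k IHk] /=; first by rewrite set0I.
rewrite setIUl IHk ltnS [(i <= k)%N]leq_eqVlt.
case: insubP => [j _ <-|k_ge_n]; last first.
  by rewrite set0I setU0 (_ : i == k :> nat = false) //; apply: contraNF k_ge_n => /eqP <-.
have [<-|neq_ij] := eqVneq i j.
  by rewrite eqxx ltnn set0U; apply/setIidPl/choose_set_sub.
rewrite val_eqE (negbTE neq_ij) /= -/(ALGi b j).
suff -> : ALGi b j :&: Mset i = set0 by rewrite setU0.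
apply/setP => x; rewrite !inE; apply/negbTE/andP => -[/(subsetP (choose_set_sub _ _ _))].
by rewrite !inE => /eqP -> /eqP eq_ji; rewrite eq_ji eqxx in neq_ij.
Qed.

Lemma ALG_setI_Mset b i : ALG b :&: Mset i = ALGi b i.
Proof. by rewrite /ALG prefix_setI_Mset ltn_ord. Qed.

Lemma sum_price b : C set0 = 0 -> \sum_(i < n) price b i = C (ALG b).
Proof.
move=> C0; pose F k := C (pre b k).
rewrite (eq_bigr (fun i : 'I_n => F i.+1 - F i)) => [|i _]; last by rewrite /F prefix_S.
by rewrite -(big_mkord xpredT (fun k => F k.+1 - F k)) telescope_sumr // /F C0 subr0.
Qed.

Lemma utility_le_truthful v b (j : 'I_n) :
  (forall i : 'I_n, (i < j)%N -> b i =1 v i) -> utility v b j <= utility v v j.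
Proof.
move=> eq_before; rewrite /utility /price /ALGi (prefix_eq _ _ _ eq_before).
by have := choose_set_max v j (pre v j) _ (choose_set_sub b j (pre v j)); rewrite /mutil.
Qed.

Lemma sequential_weakly_gsp v : weakly_gsp own C ord v.
Proof.
move=> K b /set0Pn[j0 j0K] b_truthful _ gain.
have [j jK j_first] := arg_minnP (fun j : 'I_n => val j) j0K.
exists j => //; apply/eqP; rewrite eq_le gain //= utility_le_truthful // => i lt_ij.
by apply: b_truthful; apply: contraTN lt_ij => /j_first; rewrite -leqNgt.
Qed.

Lemma price_add_loss_le v (i : 'I_n) (S : {set T}) :
  subadditive C -> (forall S1 S2 : {set T}, S1 \subset S2 -> C S1 <= C S2) ->
  price v i + (v i (Mset i) - v i (ALGi v i)) <=
  C S + (v i (Mset i) - v i (S :&: Mset i)).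
Proof.
move=> Csub Cmono; rewrite /price; set A := pre v i.
have := choose_set_max v i A _ (subsetIr S (Mset i)); rewrite /mutil -/(ALGi v i).
have := Csub A (S :&: Mset i); have := Cmono _ _ (subsetIl S (Mset i)).
lra.
Qed.

Lemma social_cost_ALG_le v S :
  cost_function C -> subadditive C -> (forall i, valuation own i (v i)) ->
  social_cost own C v (ALG v) <= n%:R * social_cost own C v S.
Proof.
move=> [C0 _ Cmono] Csub val_v.
pose loss i := v i (Mset i) - v i (S :&: Mset i).
have loss_ge0 i : 0 <= loss i.
  by have [_ _ v_mono] := val_v i; rewrite subr_ge0 v_mono ?subsetIr.
have -> : n%:R * social_cost own C v S = \sum_(i < n) social_cost own C v S.
  by rewrite sumr_const card_ord mulr_natl.
rewrite {1}/social_cost -sum_price // -big_split.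
apply: ler_sum => i _; rewrite ALG_setI_Mset.
apply: le_trans (price_add_loss_le v i S Csub Cmono) _.
rewrite /social_cost lerD2l (bigD1 i) //= lerDl.
by apply: sumr_ge0 => j _; apply: loss_ge0.
Qed.

End Sequential.

Theorem theorem7p4 (R : realFieldType) (T : finType) (n : nat) (own : T -> 'I_n)
  (C : {set T} -> R) (ord : 'I_n -> seq {set T}) (v : 'I_n -> {set T} -> R) :
  cost_function C -> subadditive C ->
  tiebreak_order own ord ->
  (forall i, valuation own i (v i)) ->
  [/\ weakly_gsp own C ord v,
      \sum_(i < n) price own C ord v i = C (ALG own C ord v) &
      forall S : {set T},
        social_cost own C v (ALG own C ord v) <= n%:R * social_cost own C v S].
Proof.
move=> costC Csub tb val_v; have [C0 _ _] := costC.
split; first exact: sequential_weakly_gsp tb v.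
- exact: sum_price.
- by move=> S; apply: social_cost_ALG_le.
Qed.
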